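(* Let $(L,\vee,\wedge,0,1)$ be a complemented modular lattice with $0\ne1$ and $a,b\in L$. Then: (i) $\{a\}\wedge(a\to b)=\{a\wedge b\}$ (and $a\wedge b\le b$); (ii) if $a^+\le b^+$ then $(a\to b)\wedge b^+=a^+$; (iii) if $c\in a\to b$ then $a\to c=a\to b$; (iv) $a\to(a\to b)=a\to b$; (v) if $a^+\le \{b\}$ then $a\to b=\{b\}$.
   Context: For $a\in L$, $a^+:=\{x\in L\mid a\vee x=1,\ a\wedge x=0\}$ (the set of all complements of $a$). For $A,B\subseteq L$: $A\vee B:=\{x\vee y\mid x\in A,y\in B\}$, $A\wedge B:=\{x\wedge y\mid x\in A,y\in B\}$, and $A\le B$ means $x\le y$ for all $x\in A$ and all $y\in B$. For $a,b\in L$, $a\to b:=a^+\vee\{a\wedge b\}$, and for $A\subseteq L$, $a\to A:=\{a\}^+\vee(\{a\}\wedge A)=\{x\vee(a\wedge y)\mid x\in a^+,y\in A\}$. *)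

From HB Require Import structures.
From mathcomp Require Import all_boot all_order.
Set Implicit Arguments. Unset Strict Implicit. Unset Printing Implicit Defensive.
Import Order.TTheory.
Local Open Scope order_scope.

(* Subsets of a lattice are represented as predicates L -> Prop;
   set equality is Leibniz equality of predicates. *)
Section LatticeSets.
Context {d : Order.disp_t} {L : tbLatticeType d}.

Definition modular_lattice : Prop :=
  forall x y z : L, x <= z -> x `|` (y `&` z) = (x `|` y) `&` z.

Definition complemented_lattice : Prop :=
  forall x : L, exists y : L, x `|` y = \top /\ x `&` y = \bot.

Definition compls (a : L) : L -> Prop :=
  fun x => a `|` x = \top /\ a `&` x = \bot.

Definition sing (a : L) : L -> Prop := fun x => x = a.

Definition setJoin (A B : L -> Prop) : L -> Prop :=
  fun z => exists x y, A x /\ B y /\ z = x `|` y.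

Definition setMeet (A B : L -> Prop) : L -> Prop :=
  fun z => exists x y, A x /\ B y /\ z = x `&` y.

Definition setLe (A B : L -> Prop) : Prop :=
  forall x y, A x -> B y -> x <= y.

Definition imp (a b : L) : L -> Prop := setJoin (compls a) (sing (a `&` b)).

(* a -> A := a^+ \/ ({a} /\ A) *)
Definition impS (a : L) (A : L -> Prop) : L -> Prop :=
  setJoin (compls a) (setMeet (sing a) A).

End LatticeSets.

From HB Require Import structures.
From mathcomp Require Import all_boot all_order.
From mathcomp Require Import boolp.
Set Implicit Arguments. Unset Strict Implicit. Unset Printing Implicit Defensive.
Import Order.TTheory.
Local Open Scope order_scope.

(* For a complement x of a, modularity gives
   a /\ (x \/ (a /\ b)) = (a /\ b) \/ (a /\ x) = a /\ b, so every element of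
   a -> b meets a in a /\ b and a -> b depends on b only through a /\ b; this
   gives (i), (iii) and (iv).  In (ii) and (v) the complement x lies below the
   element that x \/ (a /\ b) is met with, resp. below b, and the modular law
   collapses x \/ (a /\ b) to x, resp. to b. *)

Section Implication.
Context {d : Order.disp_t} {L : tbLatticeType d}.
Hypothesis modL : modular_lattice (L := L).
Hypothesis complL : complemented_lattice (L := L).

Lemma imp_meetl (a b y : L) : imp a b y -> a `&` y = a `&` b.
Proof.
case=> x [_ [[_ ax0] [-> ->]]].
by rewrite meetC joinC -modL ?leIl // [x `&` a]meetC ax0 joinx0.
Qed.

Lemma imp_exists (a b : L) : exists y, imp a b y.
Proof.
have [x ax] := complL a.
by exists (x `|` (a `&` b)), x, (a `&` b).
Qed.

Lemma meet_sing_imp (a b : L) : setMeet (sing a) (imp a b) = sing (a `&` b).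
Proof.
apply/predeqP => z; split.
- by case=> _ [y [-> [/imp_meetl ayb ->]]].
- move=> ->; have [y aby] := imp_exists a b.
  by exists a, y; rewrite (imp_meetl aby).
Qed.

Lemma impS_imp (a b : L) : impS a (imp a b) = imp a b.
Proof. by rewrite /impS meet_sing_imp. Qed.

Lemma modular_join_meet_compl (a b x y : L) : compls b y -> x <= y ->
  (x `|` (a `&` b)) `&` y = x.
Proof.
move=> [_ by0] xy; rewrite -modL //.
suff -> : a `&` b `&` y = \bot by rewrite joinx0.
by apply/eqP; rewrite -lex0 -by0 -meetA leIr.
Qed.

Lemma modular_join_compl_le (a b x : L) : compls a x -> x <= b ->
  x `|` (a `&` b) = b.
Proof. by case=> ax1 _ xb; rewrite modL // joinC ax1 meet1x. Qed.

Lemma imp_meet_compls (a b : L) : setLe (compls a) (compls b) ->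
  setMeet (imp a b) (compls b) = compls a.
Proof.
move=> le_ab; apply/predeqP => z; split.
- case=> _ [y [[x [_ [ax [-> ->]]]] [bY ->]]].
  by rewrite modular_join_meet_compl // le_ab.
- move=> az; have [y bY] := complL b.
  exists (z `|` (a `&` b)), y; split; first by exists z, (a `&` b).
  by rewrite modular_join_meet_compl // le_ab.
Qed.

Lemma imp_sing (a b : L) : setLe (compls a) (sing b) -> imp a b = sing b.
Proof.
move=> le_ab; apply/predeqP => z; split.
- by case=> x [_ [ax [-> ->]]]; rewrite /sing modular_join_compl_le // le_ab.
- move=> ->; have [x ax] := complL a.
  by exists x, (a `&` b); rewrite modular_join_compl_le // le_ab.
Qed.

End Implication.

Theorem theorem4 (d : Order.disp_t) (L : tbLatticeType d)
  (hmod : modular_lattice (L := L)) (hcompl : complemented_lattice (L := L))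
  (hnt : (\bot : L) != \top) (a b : L) :
  [/\ setMeet (sing a) (imp a b) = sing (a `&` b) /\ a `&` b <= b,
      setLe (compls a) (compls b) -> setMeet (imp a b) (compls b) = compls a,
      (forall c : L, imp a b c -> imp a c = imp a b),
      impS a (imp a b) = imp a b
    & setLe (compls a) (sing b) -> imp a b = sing b].
Proof.
split.
- by split; [exact: meet_sing_imp | exact: leIr].
- exact: imp_meet_compls.
- by move=> c /(imp_meetl hmod) abc; rewrite /imp abc.
- exact: impS_imp.
- exact: imp_sing.
Qed.
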